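(* Every symmetric pseudo-Boolean function $f:\{0,1\}^n\to\mathbb{R}$, with $f(x)=k_{|x|}$, can be represented uniquely in the form \[ f(x)=\sum_{i=0}^{n}\alpha_i\,\min\Bigl(0,\; i-\tfrac12-\sum_{r=1}^n x_r\Bigr)\quad\text{for all }x\in\{0,1\}^n, \] where $\alpha_i=-8\sum_{j=0}^{i}(-1)^{i-j}k_j-2k_{i-1}+6k_i$ for $i=0,1,\ldots,n$, with the convention $k_{-1}=0$.
   Context: A pseudo-Boolean function is a map $\{0,1\}^n\to\mathbb{R}$; it is symmetric if there are reals $k_0,\ldots,k_n$ with $f(x)=k_l$ whenever the Hamming weight $|x|=\sum_j x_j$ equals $l$. *)

From HB Require Import structures.
From mathcomp Require Import all_boot all_order all_algebra.
Set Implicit Arguments. Unset Strict Implicit. Unset Printing Implicit Defensive.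
Import Order.TTheory GRing.Theory Num.Theory.
Local Open Scope ring_scope.

Definition hweight (n : nat) (x : 'I_n -> bool) : nat := (\sum_(j < n) (x j : nat))%N.

Definition symmetric_with (R : realFieldType) (n : nat)
  (f : ('I_n -> bool) -> R) (k : nat -> R) : Prop :=
  forall x, f x = k (hweight x).

Definition kprev (R : realFieldType) (k : nat -> R) (i : nat) : R :=
  if i is i'.+1 then k i' else 0.

Definition alpha (R : realFieldType) (k : nat -> R) (i : nat) : R :=
  - 8 * (\sum_(j < i.+1) (-1) ^+ (i - j) * k j) - 2 * kprev k i + 6 * k i.

Definition minterm (R : realFieldType) (n : nat) (i : nat) (x : 'I_n -> bool) : R :=
  Num.min 0 (i%:R - 2^-1 - \sum_(r < n) (x r)%:R).

Definition rep (R : realFieldType) (n : nat) (beta : nat -> R) (x : 'I_n -> bool) : R :=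
  \sum_(i < n.+1) beta i * minterm R i x.

From HB Require Import structures.
From mathcomp Require Import all_boot all_order all_algebra.
From mathcomp Require Import ring lra.
Import Order.TTheory GRing.Theory Num.Theory.
Local Open Scope ring_scope.

(* On a point of Hamming weight w the basis function min(0, i - 1/2 - |x|)
   vanishes for i > w and equals i - 1/2 - w otherwise, so the representation
   only depends on w and equals g_b(w) = sum_{i <= w} b_i (i - 1/2 - w).
   Since the diagonal coefficient of this triangular system is -1/2, the
   values g_b(0), ..., g_b(n) determine b_0, ..., b_n: this is uniqueness.
   For existence, g_b(w+1) = g_b(w) - sum_{i <= w} b_i - b_{w+1}/2, and the
   partial sums of alpha are -4 A_w + 2 k_w, where A is the alternating sum
   of k, so A_{w+1} = k_{w+1} - A_w; induction on w gives g_alpha(w) = k_w. *)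

Lemma hweight_le {n : nat} (x : 'I_n -> bool) : (hweight x <= n)%N.
Proof.
rewrite -[leqRHS]card_ord -sum1_card /hweight.
by apply: leq_sum => j _; case: (x j).
Qed.

Lemma hweight_prefix {n w : nat} :
  (w <= n)%N -> hweight (fun j : 'I_n => (j < w)%N) = w.
Proof.
move=> le_wn; rewrite /hweight -(big_mkord xpredT (fun j => ((j < w)%N : nat))).
rewrite (big_cat_nat (leq0n w) le_wn) /= [X in (_ + X)%N]big1_seq => [|j].
  by rewrite addn0 (eq_big_nat _ _ (F2 := fun=> 1%N)) => [|j /andP[_ ->]];
    rewrite ?sum_nat_const_nat ?subn0 ?muln1.
by rewrite mem_index_iota leqNgt => /andP[_ /andP[/negbTE->]].
Qed.

Section WeightForm.

Context {R : realFieldType}.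
Implicit Types (b c k : nat -> R) (i w : nat).

Definition rep_weight b w : R := \sum_(i < w.+1) b i * (i%:R - 2^-1 - w%:R).

Lemma min0_shift i w :
  Num.min 0 (i%:R - 2^-1 - w%:R) = if (i <= w)%N then i%:R - 2^-1 - w%:R else 0 :> R.
Proof.
case: leqP => [le_iw | lt_wi].
- have : i%:R <= w%:R :> R by rewrite ler_nat.
  by move=> ?; apply: min_r; lra.
- have : w%:R + 1 <= i%:R :> R by rewrite natr1 ler_nat.
  by move=> ?; apply: min_l; lra.
Qed.

Lemma rep_hweight n b (x : 'I_n -> bool) : rep b x = rep_weight b (hweight x).
Proof.
have le_xn := hweight_le x.
rewrite /rep /rep_weight.
rewrite (big_ord_widen n.+1 (fun i => b i * (i%:R - 2^-1 - (hweight x)%:R))) //.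
rewrite [RHS]big_mkcond /=.
apply: eq_bigr => i _; rewrite /minterm -natr_sum min0_shift ltnS.
by case: ifP; rewrite ?mulr0.
Qed.

Lemma rep_weightS b w :
  rep_weight b w.+1 = rep_weight b w - \sum_(i < w.+1) b i - b w.+1 / 2.
Proof.
rewrite /rep_weight big_ord_recr /= -sumrB -(natr1 w).
have -> : \sum_(i < w.+1) b i * (i%:R - 2^-1 - (w%:R + 1))
        = \sum_(i < w.+1) (b i * (i%:R - 2^-1 - w%:R) - b i).
  by apply: eq_bigr => i _; ring.
by rewrite sumrB; field.
Qed.

Lemma rep_weight_recr b w :
  rep_weight b w = \sum_(i < w) b i * (i%:R - 2^-1 - w%:R) - b w / 2.
Proof.
by rewrite /rep_weight big_ord_recr /=; congr (_ + _); field.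
Qed.

Lemma rep_weight_inj n b c :
  (forall w, (w <= n)%N -> rep_weight b w = rep_weight c w) ->
  forall i, (i <= n)%N -> b i = c i.
Proof.
move=> eq_bc; elim/ltn_ind => i IH le_in.
have := eq_bc i le_in; rewrite !rep_weight_recr.
rewrite (eq_bigr (fun j : 'I_i => c j * (j%:R - 2^-1 - i%:R))); last first.
  by move=> j _; rewrite IH // (leq_trans (ltnW (ltn_ord j)) le_in).
move/addrI/oppr_inj => eq_half.
have half_neq0 : 2^-1 != 0 :> R by rewrite invr_eq0 pnatr_eq0.
by apply: (mulIf half_neq0).
Qed.

Definition altsum k i : R := \sum_(j < i.+1) (-1) ^+ (i - j) * k j.

Lemma altsumS k w : altsum k w.+1 = k w.+1 - altsum k w.
Proof.
rewrite /altsum big_ord_recr /= subnn expr0 mul1r addrC -sumrN; congr (_ + _).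
by apply: eq_bigr => j _; rewrite subSn 1?exprS ?mulN1r ?mulNr // -ltnS.
Qed.

Lemma alphaE k i : alpha k i = - 8 * altsum k i - 2 * kprev k i + 6 * k i.
Proof. by []. Qed.

Lemma sum_alpha k w : \sum_(i < w.+1) alpha k i = - 4 * altsum k w + 2 * k w.
Proof.
elim: w => [|w IH].
  by rewrite big_ord1 alphaE /altsum big_ord1 expr0 mul1r /=; ring.
by rewrite big_ord_recr /= IH alphaE altsumS /=; ring.
Qed.

Lemma rep_weight_alpha k w : rep_weight (alpha k) w = k w.
Proof.
elim: w => [|w IH].
  by rewrite /rep_weight big_ord1 alphaE /altsum big_ord1 expr0 mul1r /=; field.
by rewrite rep_weightS IH sum_alpha alphaE altsumS /=; field.
Qed.

End WeightForm.

Theorem corollary1 (R : realFieldType) (n : nat)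
  (f : ('I_n -> bool) -> R) (k : nat -> R) :
  symmetric_with f k ->
  (forall x, f x = rep (alpha k) x) /\
  (forall beta : nat -> R, (forall x, f x = rep beta x) ->
     forall i, (i <= n)%N -> beta i = alpha k i).
Proof.
move=> f_sym; split=> [x | beta f_rep].
  by rewrite f_sym rep_hweight rep_weight_alpha.
apply: (rep_weight_inj n) => w le_wn.
have := f_rep (fun j : 'I_n => (j < w)%N).
by rewrite f_sym rep_hweight hweight_prefix // rep_weight_alpha.
Qed.
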